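(* If $P$ is a generic flat set of $n$ points in convex position in the plane, then $\operatorname{cr}(P)\ge n-3$.
   Context: A point set in convex position is flat if the maximum difference in $y$-coordinates between any two of its points is smaller than the minimum difference in $x$-coordinates between any two of its points. A finite planar point set is generic if no three of its points are collinear and every subset has a unique Euclidean minimum spanning tree (MST); for generic $X$, $T_X$ is its MST drawn with straight-line edges. For disjoint $R,B$ with $R\cup B$ generic, $\operatorname{cr}(R,B)$ is the number of crossings between edges of $T_R$ and edges of $T_B$, and $\operatorname{cr}(P)=\max\operatorname{cr}(R,B)$ over all partitions $P=R\cup B$ into two disjoint sets. *)

From mathcomp Require Import all_boot all_order all_algebra.
From mathcomp Require Import reals.
Set Implicit Arguments. Unset Strict Implicit. Unset Printing Implicit Defensive.
Import Order.TTheory GRing.Theory Num.Theory.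
Local Open Scope ring_scope.

(* A planar point set of n points is given by an injective map p : 'I_n -> R*R.  An (undirected) edge is an
   ordered pair (i, j) with i < j (so each edge has a unique representative). *)

Section Geometry.
Variable R : realType.
Variable n : nat.
Implicit Types (p : 'I_n -> R * R) (S : {set 'I_n}) (E : {set 'I_n * 'I_n}).

Definition orient (a b c : R * R) : R :=
  (b.1 - a.1) * (c.2 - a.2) - (b.2 - a.2) * (c.1 - a.1).

Definition dist (a b : R * R) : R :=
  Num.sqrt ((a.1 - b.1) ^+ 2 + (a.2 - b.2) ^+ 2).

Definition no_three_collinear p : Prop :=
  forall i j k : 'I_n, i != j -> j != k -> i != k -> orient (p i) (p j) (p k) != 0.

Definition convex_position p : Prop :=
  forall i : 'I_n, ~ exists lam : 'I_n -> R,
    [/\ forall j, 0 <= lam j, lam i = 0, \sum_j lam j = 1,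
        \sum_j lam j * (p j).1 = (p i).1 & \sum_j lam j * (p j).2 = (p i).2].

Definition flat p : Prop :=
  forall i j k l : 'I_n, k != l -> `|(p i).2 - (p j).2| < `|(p k).1 - (p l).1|.

Definition edge_rel E : rel 'I_n := fun x y => ((x, y) \in E) || ((y, x) \in E).

Definition spanning_tree S E : Prop :=
  [/\ forall e, e \in E -> [&& (e.1 < e.2)%N, e.1 \in S & e.2 \in S],
      forall x y, x \in S -> y \in S -> connect (edge_rel E) x y
    & #|E| = (#|S|).-1].

Definition weight p E : R := \sum_(e in E) dist (p e.1) (p e.2).

Definition is_MST p S E : Prop :=
  spanning_tree S E /\ forall E', spanning_tree S E' -> weight p E <= weight p E'.

Definition generic p : Prop :=
  no_three_collinear p /\ forall S, exists! E, is_MST p S E.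

Definition seg_cross (a b c d : R * R) : bool :=
  (orient a b c * orient a b d < 0) && (orient c d a * orient c d b < 0).

Definition crossings p (ER EB : {set 'I_n * 'I_n}) : nat :=
  #|[set ef : ('I_n * 'I_n) * ('I_n * 'I_n) |
      [&& ef.1 \in ER, ef.2 \in EB &
          seg_cross (p ef.1.1) (p ef.1.2) (p ef.2.1) (p ef.2.2)]]|.

(* cr(P) >= k : some partition P = R u B has cr(R, B) >= k, where
   cr(R, B) is the number of crossings of the (unique) MSTs T_R and T_B *)
Definition cr_ge p (k : nat) : Prop :=
  exists Rs : {set 'I_n},
    forall ER EB, is_MST p Rs ER -> is_MST p (~: Rs) EB -> (k <= crossings p ER EB)%N.

End Geometry.

From mathcomp Require Import all_boot all_order all_algebra.
From mathcomp Require Import reals.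
From mathcomp Require Import ring lra zify.
Set Implicit Arguments. Unset Strict Implicit. Unset Printing Implicit Defensive.
Import Order.TTheory GRing.Theory Num.Theory.

(* For a flat set every Euclidean MST is the path through its points in order of
   x-coordinate: if X a < X w < X c then |aw| and |wc| are both shorter than |ac|,
   so an edge ac of a minimum spanning tree could be exchanged for aw or wc.
   Sort P by x as p_0, ..., p_(n-1).  Convex position forces each inner point
   p_k to lie strictly below every chord p_i p_l with i < k < l, or strictly
   above every such chord.  Colour p_0 and p_1 differently; for 2 <= k <= n-2
   let p_k keep the colour of p_(k-1) iff the two lie on opposite sides of the
   chord p_0 p_(n-1), and give p_(n-1) the colour opposite to p_(n-2).  For
   every 2 <= k <= n-2 the path of the colour of p_k then has an edge with
   right end p_k crossing an edge of the other path whose right end lies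
   further right, so distinct k give distinct crossings. *)

Lemma connect_ind (T : finType) (e : rel T) (P : T -> Prop) x y :
  P x -> (forall a b, P a -> e a b -> P b) -> connect e x y -> P y.
Proof.
move=> Px Pe /connectP [s + ->].
by elim: s x Px => [|z s IH] x Px //= /andP [/(Pe _ _ Px) Pz /(IH _ Pz)].
Qed.

Section SpanningTrees.
Variable n : nat.
Implicit Types (S C : {set 'I_n}) (E : {set 'I_n * 'I_n}).

Definition edges_within S E := forall e, e \in E -> (e.1 \in S) && (e.2 \in S).

Definition connected_on S E :=
  forall x y, x \in S -> y \in S -> connect (edge_rel E) x y.

Definition component S E r := [set x in S | connect (edge_rel E) r x].

Definition induced_edges C E := [set e in E | (e.1 \in C) && (e.2 \in C)].

Lemma edge_rel_sym E : symmetric (edge_rel E).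
Proof. by move=> x y; rewrite /edge_rel orbC. Qed.

Lemma connect_edge_relC E x y :
  connect (edge_rel E) x y = connect (edge_rel E) y x.
Proof. exact/sym_connect_sym/edge_rel_sym. Qed.

Lemma connect_edge_rel_subset E E' x y : E \subset E' ->
  connect (edge_rel E) x y -> connect (edge_rel E') x y.
Proof.
move=> /subsetP sEE'; apply: connect_sub => a b /orP [] /sEE' h;
  by apply: connect1; rewrite /edge_rel h ?orbT.
Qed.

Lemma connected_on_from r S E :
  (forall x, x \in S -> connect (edge_rel E) r x) -> connected_on S E.
Proof.
move=> rS x y xS yS; apply: (@connect_trans _ _ r); last exact: rS.
by rewrite connect_edge_relC; apply: rS.
Qed.

Lemma edge_rel_within S E a b :
  edges_within S E -> edge_rel E a b -> (a \in S) && (b \in S).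
Proof. by move=> ES /orP [] /ES //; rewrite andbC. Qed.

Lemma edge_rel_setD1 E f a b : edge_rel E a b ->
  [|| edge_rel (E :\ f) a b, b == f.1 | b == f.2].
Proof.
rewrite /edge_rel !in_setD1.
case/orP => h; rewrite h !andbT.
  by case: (eqVneq (a, b) f) => [<-|_]; rewrite ?eqxx ?orbT.
by case: (eqVneq (b, a) f) => [<-|_]; rewrite ?eqxx ?orbT.
Qed.

Lemma connect_setD1 E f x : connect (edge_rel E) f.1 x ->
  connect (edge_rel (E :\ f)) f.1 x || connect (edge_rel (E :\ f)) f.2 x.
Proof.
elim/connect_ind; first by rewrite connect0.
move=> a b reach_a /(edge_rel_setD1 f) /or3P [ab|/eqP->|/eqP->];
  rewrite ?connect0 ?orbT //.
by case/orP: reach_a => h; rewrite (connect_trans h (connect1 ab)) ?orbT.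
Qed.

Lemma component_connected S E r : edges_within S E ->
  connected_on (component S E r) (induced_edges (component S E r) E).
Proof.
move=> ES; set C := component S E r; apply: (@connected_on_from r) => x.
rewrite inE => /andP [_]; elim/connect_ind; first exact: connect0.
move=> a b ra ab; have [aS bS] := andP (edge_rel_within ES ab).
have sCE : induced_edges C E \subset E by apply/subsetP => e; rewrite inE => /andP [].
have raE := connect_edge_rel_subset sCE ra.
have aC : a \in C by rewrite inE aS raE.
have bC : b \in C by rewrite inE bS (connect_trans raE (connect1 ab)).
apply: (connect_trans ra); apply: connect1.
by apply/orP; case/orP: ab => h; [left|right]; rewrite [_ \in induced_edges _ _]inE /= h aC bC.
Qed.

Lemma card_connected_on_set0 S : connected_on S set0 -> #|S| <= 1.
Proof.
move=> S0; apply/card_le1P => x xS y; apply/idP/idP => [yS|]; last first.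
  by rewrite inE => /eqP ->.
rewrite inE; elim/connect_ind: (S0 x y xS yS) => [|a b _]; first exact: eqxx.
by rewrite /edge_rel !inE.
Qed.

Lemma components_disjoint S E r r' : ~~ connect (edge_rel E) r r' ->
  component S E r :&: component S E r' = set0.
Proof.
move=> nrr'; apply/setP => x; rewrite !inE; apply/negP => /andP [/andP [_ rx] /andP [_ r'x]].
by move/negP: nrr'; apply; apply: (connect_trans rx); rewrite connect_edge_relC.
Qed.

Lemma induced_edges_disjoint C C' E : C :&: C' = set0 ->
  induced_edges C E :&: induced_edges C' E = set0.
Proof.
move=> CC'0; apply/setP => e; rewrite in_setI in_set0.
apply/negP => /andP [/setIdP [_ /andP [eC _]] /setIdP [_ /andP [eC' _]]].
by have := in_set0 e.1; rewrite -CC'0 in_setI eC eC'.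
Qed.

(* Deleting an edge either keeps S connected or splits it into the components
   of the two endpoints of that edge. *)
Lemma card_connected_on S E :
  edges_within S E -> connected_on S E -> #|S| <= #|E|.+1.
Proof.
have [k] := ubnP #|E|; elim: k S E => // k IH S E ltEk ES SE.
have [E0|[f fE]] := set_0Vmem E.
  by move: SE; rewrite E0 => /card_connected_on_set0; rewrite cards0.
set E' := E :\ f; have cardE : #|E| = #|E'|.+1 by rewrite (cardsD1 f) fE.
have ltE'k : #|E'| < k by rewrite -ltnS -cardE.
have E'S : edges_within S E' by move=> e; rewrite inE => /andP [_ /ES].
set A := component S E' f.1; set B := component S E' f.2.
have SAB : S \subset A :|: B.
  apply/subsetP => x xS; rewrite !inE xS; apply/connect_setD1/SE => //.
  by case/andP: (ES f fE).
have [f12|nf12] := boolP (connect (edge_rel E') f.1 f.2).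
  suff /(IH _ _ ltE'k E'S) : connected_on S E' by rewrite cardE => /leqW.
  apply: (@connected_on_from f.1) => x /(subsetP SAB).
  by rewrite !inE => /orP [] /andP [_] // /(connect_trans f12).
have AB0 := components_disjoint S nf12; rewrite -/A -/B in AB0.
set EA := induced_edges A E'; set EB := induced_edges B E'.
have EAB0 : EA :&: EB = set0 by apply: induced_edges_disjoint.
have sEAB : EA :|: EB \subset E'.
  by apply/subsetP => e; rewrite !inE => /orP [] /andP [].
have IHC r : #|component S E' r| <= #|induced_edges (component S E' r) E'|.+1.
  apply: IH; last exact: component_connected.
    apply: leq_ltn_trans ltE'k; apply/subset_leq_card/subsetP => e.
    by rewrite inE => /andP [].
  by move=> e; rewrite inE => /andP [].
have := cardsUI A B; have := cardsUI EA EB; rewrite AB0 EAB0 !cards0 !addn0.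
have := subset_leq_card SAB; have := subset_leq_card sEAB.
have := IHC f.1; have := IHC f.2; rewrite -/A -/B -/EA -/EB cardE; lia.
Qed.

Lemma spanning_tree_edges_within S E : spanning_tree S E -> edges_within S E.
Proof. by case=> ES _ _ e /ES /and3P [_ -> ->]. Qed.

Lemma spanning_tree_setD1_disconnect S E f : spanning_tree S E -> f \in E ->
  ~~ connect (edge_rel (E :\ f)) f.1 f.2.
Proof.
move=> /[dup] /spanning_tree_edges_within ES [_ SE cardE] fE; apply/negP => f12.
have [f1S _] := andP (ES f fE).
have E'S : edges_within S (E :\ f) by move=> e; rewrite inE => /andP [_ /ES].
have : connected_on S (E :\ f).
  apply: (@connected_on_from f.1) => x xS.
  case/orP: (connect_setD1 (SE _ _ f1S xS)) => // /(connect_trans f12); exact.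
move/(card_connected_on E'S); rewrite (cardsD1 f E) fE in cardE.
have : 0 < #|S| by apply/card_gt0P; exists f.1.
lia.
Qed.

Definition edge (i j : 'I_n) : 'I_n * 'I_n := if i < j then (i, j) else (j, i).

Lemma edge_cases i j : edge i j = (i, j) \/ edge i j = (j, i).
Proof. by rewrite /edge; case: ifP; [left|right]. Qed.

Lemma edgeC i j : edge i j = edge j i.
Proof. by rewrite /edge; case: ltngtP => // /val_inj ->. Qed.

Lemma edge_lt i j : i != j -> (edge i j).1 < (edge i j).2.
Proof. by rewrite /edge neq_ltn; case: ltnP => //= _ /orP []. Qed.

Lemma edge_rel_edge E x y : edge x y \in E -> edge_rel E x y.
Proof. by rewrite /edge_rel; case: (edge_cases x y) => -> ->; rewrite ?orbT. Qed.

Lemma edges_within_edge S E a c : edges_within S E -> edge a c \in E ->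
  (a \in S) && (c \in S).
Proof. by move=> ES /edge_rel_edge /(edge_rel_within ES). Qed.

Lemma connect_setD1_edge E a c x : edge a c \in E -> connect (edge_rel E) a x ->
  connect (edge_rel (E :\ edge a c)) a x || connect (edge_rel (E :\ edge a c)) c x.
Proof.
move=> acE; case: (edge_cases a c) => eac; rewrite eac; first exact: (@connect_setD1 E (a, c) x).
move=> ax; rewrite orbC; apply: (@connect_setD1 E (c, a) x).
by apply: connect_trans ax; apply/connect1/edge_rel_edge; rewrite edgeC.
Qed.

Lemma spanning_tree_exchange S E a c w : spanning_tree S E -> edge a c \in E ->
  w \in S -> w != c -> connect (edge_rel (E :\ edge a c)) a w ->
  edge w c \notin E :\ edge a c /\ spanning_tree S (edge w c |: E :\ edge a c).
Proof.
move=> T acE wS wc aw; have [ES SE cardE] := T.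
have [aS cS] := andP (edges_within_edge (spanning_tree_edges_within T) acE).
set E' := E :\ edge a c; set g := edge w c.
have nac : ~~ connect (edge_rel E') a c.
  have := spanning_tree_setD1_disconnect T acE; rewrite -/E'.
  by case: (edge_cases a c) => -> //=; rewrite connect_edge_relC.
have gE' : g \notin E'.
  apply: contra nac => /edge_rel_edge wc'.
  exact: connect_trans aw (connect1 wc').
have sE'E1 : E' \subset g |: E' by apply/subsetP => e eE'; rewrite in_setU1 eE' orbT.
have ac1 : connect (edge_rel (g |: E')) a c.
  apply: (connect_trans (connect_edge_rel_subset sE'E1 aw)).
  by apply/connect1/edge_rel_edge/setU11.
split => //; split.
- move=> e; rewrite in_setU1 => /orP [/eqP ->|]; last by case/setD1P => _ /ES.
  rewrite /g edge_lt //; case: (edge_cases w c) => -> /=; by rewrite wS cS.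
- apply: (@connected_on_from a) => x xS.
  case/orP: (connect_setD1_edge acE (SE _ _ aS xS)) => /(connect_edge_rel_subset sE'E1) //.
  exact: connect_trans ac1.
- by rewrite cardsU1 gE' -cardE (cardsD1 (edge a c) E) acE.
Qed.

End SpanningTrees.

Section Orientation.
Local Open Scope ring_scope.
Variable R : realType.
Implicit Types a b c d : R * R.

Lemma orient_swap12 a b c : orient b a c = - orient a b c.
Proof. by rewrite /orient; ring. Qed.

Lemma orient_swap23 a b c : orient a c b = - orient a b c.
Proof. by rewrite /orient; ring. Qed.

Lemma orient_rot a b c : orient b c a = orient a b c.
Proof. by rewrite /orient; ring. Qed.

Lemma seg_crossC a b c d : seg_cross c d a b = seg_cross a b c d.
Proof. by rewrite /seg_cross andbC. Qed.

Lemma seg_cross_swapl a b c d : seg_cross b a c d = seg_cross a b c d.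
Proof.
by rewrite /seg_cross !(orient_swap12 a b) mulrNN [orient c d b * _]mulrC.
Qed.

Lemma seg_cross_swapr a b c d : seg_cross a b d c = seg_cross a b c d.
Proof. by rewrite seg_crossC seg_cross_swapl seg_crossC. Qed.

End Orientation.

Section MinimumSpanningTrees.
Local Open Scope ring_scope.
Variables (R : realType) (n : nat) (p : 'I_n -> R * R).
Implicit Types (S : {set 'I_n}) (E : {set 'I_n * 'I_n}).

Lemma distC (a b : R * R) : dist a b = dist b a.
Proof. by rewrite /dist; congr Num.sqrt; lra. Qed.

Lemma dist_edge i j : dist (p (edge i j).1) (p (edge i j).2) = dist (p i) (p j).
Proof. by case: (edge_cases i j) => -> //=; rewrite distC. Qed.

Lemma seg_cross_edge u v w z :
  seg_cross (p (edge u v).1) (p (edge u v).2) (p (edge w z).1) (p (edge w z).2)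
  = seg_cross (p u) (p v) (p w) (p z).
Proof.
case: (edge_cases u v) => ->; case: (edge_cases w z) => -> //=.
- exact: seg_cross_swapr.
- exact: seg_cross_swapl.
- by rewrite seg_cross_swapl seg_cross_swapr.
Qed.

Lemma mst_exchange S E a c w : is_MST p S E -> edge a c \in E ->
  w \in S -> w != c -> connect (edge_rel (E :\ edge a c)) a w ->
  dist (p a) (p c) <= dist (p w) (p c).
Proof.
move=> [T minE] acE wS wc aw.
have [gE' T'] := spanning_tree_exchange T acE wS wc aw.
have := minE _ T'; rewrite /weight (big_setD1 _ acE) (big_setU1 _ gE') /=.
by rewrite !dist_edge lerD2r.
Qed.

End MinimumSpanningTrees.

Section FlatPoints.
Local Open Scope ring_scope.
Variables (R : realType) (n : nat) (p : 'I_n -> R * R).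
Hypothesis p_flat : flat p.
Implicit Types (S : {set 'I_n}) (E : {set 'I_n * 'I_n}).

Local Notation X i := (p i).1.
Local Notation Y i := (p i).2.

Lemma flat_x_neq k l : k != l -> X k != X l.
Proof. by move=> /(p_flat k k); rewrite subrr normr0 normr_gt0 subr_eq0. Qed.

Lemma flat_x_inj k l : X k = X l -> k = l.
Proof. by move=> eX; apply/eqP/negPn/negP => /flat_x_neq; rewrite eX eqxx. Qed.

Lemma flat_sqr_lt i j k l : k != l -> (Y i - Y j) ^+ 2 < (X k - X l) ^+ 2.
Proof.
move=> /(p_flat i j); rewrite -(real_normK (num_real (Y i - Y j))).
rewrite -(real_normK (num_real (X k - X l))).
by have := normr_ge0 (Y i - Y j); nra.
Qed.

(* Flatness bounds the y-gaps by the x-gaps, and the cross term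
   2 (X w - X a) (X c - X w) of (X c - X a)^2 absorbs them. *)
Lemma flat_dist_between a w c : X a < X w -> X w < X c ->
  dist (p a) (p w) < dist (p a) (p c) /\ dist (p w) (p c) < dist (p a) (p c).
Proof.
move=> aw wc.
have wa : w != a by apply: contraTneq aw => ->; rewrite ltxx.
have cw : c != w by apply: contraTneq wc => ->; rewrite ltxx.
have dyaw := flat_sqr_lt a w cw; have dywc := flat_sqr_lt w c wa.
have cross : 0 < (X w - X a) * (X c - X w) by apply: mulr_gt0; lra.
have dyac := sqr_ge0 (Y a - Y c).
have dac : 0 < (X a - X c) ^+ 2 + (Y a - Y c) ^+ 2 by nra.
by rewrite /dist !ltr_sqrt //; split; nra.
Qed.

Definition x_consecutive S u v :=
  [&& u \in S, v \in S, X u < X v & [forall w in S, ~~ (X u < X w < X v)]].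

Definition x_path S := [set edge u v | u in S, v in S & x_consecutive S u v].

Lemma x_consecutive_uniq S u v v' :
  x_consecutive S u v -> x_consecutive S u v' -> v = v'.
Proof.
case/and4P => _ vS uv /forall_inP nv; case/and4P => _ v'S uv' /forall_inP nv'.
apply: flat_x_inj; case: (ltgtP (X v) (X v')) => // [vv'|v'v].
  by have := nv' _ vS; rewrite uv vv'.
by have := nv _ v'S; rewrite uv' v'v.
Qed.

Lemma mst_x_consecutive S E u v : is_MST p S E -> edge u v \in E ->
  X u < X v -> x_consecutive S u v.
Proof.
move=> mstE uvE uv; have [T _] := mstE; have [_ SE _] := T.
have [uS vS] := andP (edges_within_edge (spanning_tree_edges_within T) uvE).
rewrite /x_consecutive uS vS uv; apply/forall_inP => w wS; apply/negP => /andP [uw wv].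
have [duw dwv] := flat_dist_between uw wv.
have wu : w != u by apply: contraTneq uw => ->; rewrite ltxx.
have wv' : w != v by apply: contraTneq wv => ->; rewrite ltxx.
case/orP: (connect_setD1_edge uvE (SE _ _ uS wS)) => [uw'|vw'].
  by have := mst_exchange mstE uvE wS wv' uw'; rewrite leNgt dwv.
rewrite edgeC in uvE vw'.
by have := mst_exchange mstE uvE wS wu vw'; rewrite leNgt distC (distC (p v)) duw.
Qed.

Lemma x_path_edge S u v : x_consecutive S u v -> edge u v \in x_path S.
Proof.
by move=> uv; have [uS vS _ _] := and4P uv; apply/imset2P; exists u v; rewrite ?inE ?vS.
Qed.

Lemma mst_sub_x_path S E : is_MST p S E -> E \subset x_path S.
Proof.
move=> mstE; apply/subsetP => -[u v] uvE; have [[ES _ _] _] := mstE.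
have [/= uv _ _] := and3P (ES _ uvE).
have ee : (u, v) = edge u v by rewrite /edge uv.
rewrite ee in uvE *.
have : X u != X v by apply/flat_x_neq; rewrite neq_ltn uv.
rewrite neq_lt => /orP [ltuv|ltvu]; first exact/x_path_edge/(mst_x_consecutive mstE uvE).
by rewrite edgeC in uvE *; apply/x_path_edge/(mst_x_consecutive mstE uvE).
Qed.

Lemma card_x_path S : (#|x_path S| <= (#|S|).-1)%N.
Proof.
have [->|[i0 i0S]] := set_0Vmem S.
  rewrite cards0 leqn0 cards_eq0; apply/eqP/setP => e; rewrite inE.
  by apply/negP => /imset2P [u v]; rewrite inE.
have [m mS mmax] := @arg_maxP _ _ _ i0 (mem S) (fun i => X i) i0S.
have {}mS : m \in S by [].
pose left_end (e : 'I_n * 'I_n) := if X e.1 < X e.2 then e.1 else e.2.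
have left_endE u v : x_consecutive S u v -> left_end (edge u v) = u.
  case/and4P => _ _ uv _; rewrite /left_end.
  by case: (edge_cases u v) => -> /=; rewrite ?uv // ltNge (ltW uv).
have inj : {in x_path S &, injective left_end}.
  move=> _ _ /imset2P [u v _ /setIdP [_ uv] ->] /imset2P [u' v' _ /setIdP [_ uv'] ->].
  by rewrite !left_endE // => eu; rewrite -eu in uv'; rewrite (x_consecutive_uniq uv uv') eu.
rewrite -(card_in_imset inj) (cardsD1 m S) mS /=; apply/subset_leq_card/subsetP.
move=> _ /imsetP [_ /imset2P [u v uS /setIdP [vS uv] ->] ->].
rewrite left_endE // !inE uS andbT; apply: contraTneq uv => ->.
by have := mmax v vS; rewrite /= /x_consecutive leNgt => /negbTE ->; rewrite !andbF.
Qed.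

Lemma mst_x_path S E : is_MST p S E -> E = x_path S.
Proof.
move=> mstE; apply/eqP; rewrite eqEcard mst_sub_x_path //=.
by case: mstE => [[_ _ ->] _]; exact: card_x_path.
Qed.

End FlatPoints.

Section ConvexPosition.
Local Open Scope ring_scope.
Variables (R : realType) (n : nat) (p : 'I_n -> R * R).

Local Notation X i := (p i).1.
Local Notation Y i := (p i).2.

(* [convex_position p] unfolds to [forall b, ~ hull_without b (p b)]. *)
Definition hull_without (b : 'I_n) (q : R * R) :=
  exists lam : 'I_n -> R,
    [/\ forall j, 0 <= lam j, lam b = 0, \sum_j lam j = 1,
        \sum_j lam j * X j = q.1 & \sum_j lam j * Y j = q.2].

Definition mix (s : R) (q1 q2 : R * R) : R * R :=
  (s * q1.1 + (1 - s) * q2.1, s * q1.2 + (1 - s) * q2.2).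

Lemma hull_without_point b k : k != b -> hull_without b (p k).
Proof.
move=> kb; exists (fun j => (j == k)%:R).
have sum_k (F : 'I_n -> R) : \sum_j (j == k)%:R * F j = F k.
  by rewrite (bigD1 k) //= eqxx mul1r big1 ?addr0 // => j /negbTE ->; rewrite mul0r.
split.
- by move=> j; case: (j == k).
- by rewrite eq_sym (negbTE kb).
- by have := sum_k (fun _ => 1); under eq_bigr do rewrite mulr1.
- exact: sum_k.
- exact: sum_k.
Qed.

Lemma hull_without_mix b s q1 q2 : 0 <= s <= 1 ->
  hull_without b q1 -> hull_without b q2 -> hull_without b (mix s q1 q2).
Proof.
case/andP => s0 s1 [l1 [l1_ge0 l1b l1_sum l1x l1y]] [l2 [l2_ge0 l2b l2_sum l2x l2y]].
exists (fun j => s * l1 j + (1 - s) * l2 j).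
have sum_mix F : \sum_j (s * l1 j + (1 - s) * l2 j) * F j =
    s * \sum_j l1 j * F j + (1 - s) * \sum_j l2 j * F j.
  rewrite !mulr_sumr -big_split /=; apply: eq_bigr => j _; ring.
split.
- by move=> j; rewrite addr_ge0 // mulr_ge0 // subr_ge0.
- by rewrite l1b l2b !mulr0 addr0.
- have := sum_mix (fun _ => 1); rewrite !(eq_bigr _ (fun j _ => mulr1 _)) l1_sum l2_sum.
  by move=> ->; ring.
- by rewrite sum_mix l1x l2x.
- by rewrite sum_mix l1y l2y.
Qed.

Lemma hull_without_between_chords a c d e b :
  X a < X b < X c -> X d < X b < X e -> b \notin [:: a; c; d; e] ->
  0 < orient (p a) (p c) (p b) -> orient (p d) (p e) (p b) < 0 ->
  hull_without b (p b).
Proof.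
case/andP => ab bc /andP [db be]; rewrite !inE !negb_or => /and4P [ba bc' bd be'].
move=> above below.
have ac0 : 0 < X c - X a by lra.
have de0 : 0 < X e - X d by lra.
pose t := (X b - X a) / (X c - X a); pose u := (X b - X d) / (X e - X d).
have t01 : 0 <= 1 - t <= 1.
  by rewrite subr_ge0 gerBl /t ler_pdivrMr // divr_ge0 ?mul1r; lra.
have u01 : 0 <= 1 - u <= 1.
  by rewrite subr_ge0 gerBl /u ler_pdivrMr // divr_ge0 ?mul1r; lra.
(* q1 and q2 are the points of the chords ac and de with abscissa X b. *)
pose q1 := mix (1 - t) (p a) (p c); pose q2 := mix (1 - u) (p d) (p e).
have q1x : q1.1 = X b by rewrite /= /t; field; rewrite gt_eqF.
have q2x : q2.1 = X b by rewrite /= /u; field; rewrite gt_eqF.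
have q1y : Y b - q1.2 = orient (p a) (p c) (p b) / (X c - X a).
  by rewrite /= /t /orient; field; rewrite gt_eqF.
have q2y : Y b - q2.2 = orient (p d) (p e) (p b) / (X e - X d).
  by rewrite /= /u /orient; field; rewrite gt_eqF.
have q1_below : q1.2 < Y b by rewrite -subr_gt0 q1y divr_gt0.
have q2_above : Y b < q2.2 by rewrite -subr_lt0 q2y pmulr_llt0 ?invr_gt0.
pose s := (q2.2 - Y b) / (q2.2 - q1.2).
have q12 : 0 < q2.2 - q1.2 by lra.
have s01 : 0 <= s <= 1.
  by rewrite /s divr_ge0 ?ler_pdivrMr // ?mul1r; lra.
have -> : p b = mix s q1 q2.
  rewrite [p b]surjective_pairing /mix q1x q2x /s; congr (_, _); first ring.
  by field; rewrite subr_eq0 gt_eqF // (lt_trans q1_below q2_above).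
apply: hull_without_mix => //; [apply: hull_without_mix t01 _ _|apply: hull_without_mix u01 _ _];
  by apply: hull_without_point; rewrite eq_sym.
Qed.

End ConvexPosition.


Section XSorted.
Local Open Scope ring_scope.
Variables (R : realType) (n : nat) (p : 'I_n -> R * R).
Hypothesis p_flat : flat p.
Variable i0 : 'I_n.

Local Notation X i := (p i).1.

Definition x_rank (i : 'I_n) : nat := #|[set j | X j < X i]|.

Lemma x_rank_lt i : (x_rank i < n)%N.
Proof.
have sub : [set j | X j < X i] \subset [set~ i].
  by apply/subsetP => j; rewrite !inE; apply: contraTneq => ->; rewrite ltxx.
have := subset_leq_card sub; rewrite cardsC1 card_ord.
rewrite /x_rank; have := ltn_ord i; lia.
Qed.

Lemma x_rank_ltE i j : (x_rank i < x_rank j)%N = (X i < X j).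
Proof.
have mono k l : X k < X l -> (x_rank k < x_rank l)%N.
  move=> kl; apply/proper_card/properP; split.
    by apply/subsetP => m; rewrite !inE => /lt_trans; apply.
  by exists k; rewrite !inE ?ltxx.
apply/idP/idP => [|/mono //]; case: (ltgtP (X i) (X j)) => // [ji|eij] ij.
  by have := mono _ _ ji; rewrite ltnNge (ltnW ij).
by rewrite (flat_x_inj p_flat eij) ltnn in ij.
Qed.

Definition x_rank_ord i : 'I_n := Ordinal (x_rank_lt i).

Lemma x_rank_ord_inj : injective x_rank_ord.
Proof.
move=> i j /(congr1 val) /= eij; apply: (flat_x_inj p_flat).
by case: (ltgtP (X i) (X j)) => //; rewrite -x_rank_ltE eij ltnn.
Qed.

(* For k >= n the value is junk: insubd falls back to i0. *)
Definition x_sorted (k : nat) : 'I_n := invF x_rank_ord_inj (insubd i0 k).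

Lemma x_rank_sorted k : (k < n)%N -> x_rank (x_sorted k) = k.
Proof.
move=> kn; have : x_rank_ord (x_sorted k) = insubd i0 k by rewrite f_invF.
by move/(congr1 val) => /=; rewrite val_insubd kn.
Qed.

Lemma x_sorted_rank i : x_sorted (x_rank i) = i.
Proof.
rewrite /x_sorted (_ : insubd i0 (x_rank i) = x_rank_ord i) ?invF_f //.
by apply: val_inj; rewrite val_insubd /= x_rank_lt.
Qed.

Lemma x_sorted_lt u v : (u < n)%N -> (v < n)%N ->
  (X (x_sorted u) < X (x_sorted v)) = (u < v)%N.
Proof. by move=> un vn; rewrite -x_rank_ltE !x_rank_sorted. Qed.

Lemma x_sorted_neq u v : (u < n)%N -> (v < n)%N -> u != v -> x_sorted u != x_sorted v.
Proof. by move=> un vn; apply: contraNneq => /(congr1 x_rank); rewrite !x_rank_sorted // => ->. Qed.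

End XSorted.

Lemma ex_last_le (P : pred nat) j a0 : a0 <= j -> P a0 ->
  exists a, [/\ a <= j, P a & forall i, a < i <= j -> ~~ P i].
Proof.
move=> a0j Pa0; have exP : exists i, (i <= j) && P i by exists a0; rewrite a0j.
have ubP i : (i <= j) && P i -> i <= j by case/andP.
have [a /andP [aj Pa] amax] := ex_maxnP exP ubP.
exists a; split => // i /andP [ai ij]; apply/negP => Pi.
by have := amax i; rewrite ij Pi leqNgt ai => /(_ isT).
Qed.

Lemma ex_first_ge (P : pred nat) k m0 : k <= m0 -> P m0 ->
  exists m, [/\ k <= m <= m0, P m & forall i, k <= i < m -> ~~ P i].
Proof.
move=> km0 Pm0; have exP : exists i, [&& k <= i, i <= m0 & P i].
  by exists m0; rewrite km0 leqnn.
have [m /and3P [km mm0 Pm] mmin] := ex_minnP exP.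
exists m; split => [|//|i /andP [ki im]]; first by rewrite km.
apply/negP => Pi; have := mmin i; rewrite ki Pi (leq_trans (ltnW im) mm0) leqNgt im.
by move=> /(_ isT).
Qed.

Section FlatConvexPosition.
Local Open Scope ring_scope.
Variables (R : realType) (n : nat) (p : 'I_n -> R * R).
Hypotheses (p_flat : flat p) (p_noncollinear : no_three_collinear p)
  (p_convex : convex_position p).
Variable i0 : 'I_n.

Local Notation pt k := (x_sorted p_flat i0 k).
Local Notation q k := (p (pt k)).

(* [lower 0] and [lower n.-1] are junk (the orientation vanishes); [colour] only
   consults [lower k] for 0 < k < n.-1. *)
Definition lower (k : nat) : bool := orient (q 0) (q n.-1) (q k) < 0.

Lemma q_x_lt u v : (u < v)%N -> (v < n)%N -> (q u).1 < (q v).1.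
Proof. by move=> uv vn; rewrite x_sorted_lt // (ltn_trans uv vn). Qed.

Lemma orient_q_neq0 u v w : (u < v < w)%N -> (w < n)%N ->
  orient (q u) (q w) (q v) != 0.
Proof.
case/andP => uv vw wn.
by apply: p_noncollinear; apply: x_sorted_neq; rewrite ?neq_ltn ?uv ?vw ?(ltn_trans uv vw) //; lia.
Qed.

Lemma orient_chord_pos i l i' l' j : (i < j < l)%N -> (i' < j < l')%N ->
  (l < n)%N -> (l' < n)%N ->
  0 < orient (q i) (q l) (q j) -> 0 < orient (q i') (q l') (q j).
Proof.
case/andP => ij jl /andP [i'j jl'] ln l'n above; rewrite lt_def orient_q_neq0 ?i'j ?jl' //=.
rewrite leNgt; apply/negP => below; apply: (p_convex (i := pt j)).
have ne u : (u < n)%N -> u != j -> pt j != pt u.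
  by move=> un uj; apply: x_sorted_neq => //; [lia | rewrite eq_sym].
apply: (hull_without_between_chords (a := pt i) (c := pt l) (d := pt i') (e := pt l')) => //.
- by rewrite !q_x_lt //; lia.
- by rewrite !q_x_lt //; lia.
- by rewrite !inE !negb_or !ne //; lia.
Qed.

Lemma orient_chord_lower i j l : (i < j < l)%N -> (l < n)%N ->
  if lower j then orient (q i) (q l) (q j) < 0 else 0 < orient (q i) (q l) (q j).
Proof.
move=> ijl ln; have n1 : (n.-1 < n)%N by lia.
have jn : (0 < j < n.-1)%N by apply/andP; split; lia.
have := orient_q_neq0 ijl ln; have := orient_q_neq0 jn n1.
rewrite /lower !neq_lt; case: ltP => [below _|_ /= above].
  by case/orP => // /(orient_chord_pos ijl jn ln n1); rewrite ltNge (ltW below).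
by case/orP => // /ltW; rewrite leNgt (orient_chord_pos jn ijl n1 ln above).
Qed.

Lemma seg_cross_same_side a b c d : (a < b < c)%N -> (c < d < n)%N ->
  lower b = lower c -> seg_cross (q a) (q c) (q b) (q d).
Proof.
case/andP => ab bc /andP [cd dn] same.
have acb := orient_chord_lower (_ : (a < b < c)%N) (ltn_trans cd dn).
have adc := orient_chord_lower (_ : (a < c < d)%N) dn.
have adb := orient_chord_lower (_ : (a < b < d)%N) dn.
have bdc := orient_chord_lower (_ : (b < c < d)%N) dn.
rewrite ab bc cd (ltn_trans ab bc) (ltn_trans bc cd) -same in acb adc adb bdc.
rewrite /seg_cross (orient_swap23 (q a) (q d) (q c)) (orient_rot (q a) (q b) (q d)).
rewrite (orient_swap23 (q a) (q d) (q b)).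
by move: acb adc adb bdc; case: (lower b) => *; apply/andP; split; nra.
Qed.

Lemma seg_cross_opposite_sides a b c d : (a < b < c)%N -> (c < d < n)%N ->
  lower b != lower c -> seg_cross (q a) (q d) (q b) (q c).
Proof.
case/andP => ab bc /andP [cd dn] opposite.
have acb := orient_chord_lower (_ : (a < b < c)%N) (ltn_trans cd dn).
have adc := orient_chord_lower (_ : (a < c < d)%N) dn.
have adb := orient_chord_lower (_ : (a < b < d)%N) dn.
have bdc := orient_chord_lower (_ : (b < c < d)%N) dn.
rewrite ab bc cd (ltn_trans ab bc) (ltn_trans bc cd) in acb adc adb bdc.
rewrite /seg_cross (orient_rot (q a) (q b) (q c)) (orient_swap23 (q a) (q c) (q b)).
rewrite (orient_swap23 (q b) (q d) (q c)).
by move: acb adc adb bdc opposite; case: (lower b); case: (lower c) => // *;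
  apply/andP; split; nra.
Qed.

Fixpoint colour (k : nat) : bool :=
  match k with
  | 0 => false
  | 1 => true
  | k'.+1 => if k == n.-1 then ~~ colour k'
             else if lower k' == lower k then ~~ colour k' else colour k'
  end.

Definition colour_class (t : bool) := [set i | colour (x_rank p i) == t].

Lemma colourS k : (0 < k)%N -> colour k.+1 =
  if k.+1 == n.-1 then ~~ colour k
  else if lower k == lower k.+1 then ~~ colour k else colour k.
Proof. by case: k. Qed.

Lemma colour_mid k : (2 <= k <= n - 2)%N ->
  colour k = if lower k.-1 == lower k then ~~ colour k.-1 else colour k.-1.
Proof.
case: k => [|[|k]] // /andP [_ kn].
by rewrite colourS // (_ : (k.+2 == n.-1) = false) //; apply/negbTE; lia.
Qed.

Lemma colour_last : (3 <= n)%N -> colour n.-1 = ~~ colour n.-2.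
Proof.
move=> n3; have e : n.-1 = (n.-2).+1 by lia.
by rewrite [in LHS]e colourS -?e ?eqxx //; lia.
Qed.

Lemma colour_before j t : (0 < j)%N -> colour j != t ->
  exists a, [/\ (a < j)%N, colour a = t & forall i, (a < i <= j)%N -> colour i != t].
Proof.
move=> j0 cj; have [a [aj /eqP ca anext]] : exists a, [/\ (a <= j)%N, colour a == t &
    forall i, (a < i <= j)%N -> colour i != t].
  apply: (@ex_last_le (fun i => colour i == t) j (if t then 1 else 0)%N).
  - by case: j j0 cj => [|[|j]] //; case: t.
  - by case: (t).
by exists a; split => //; rewrite ltn_neqAle aj andbT; apply: contraNneq cj => <-; rewrite ca.
Qed.

Lemma colour_after k t : (3 <= n)%N -> (k <= n.-2)%N -> colour k != t ->
  exists m, [/\ (k < m < n)%N, colour m = t & forall i, (k <= i < m)%N -> colour i != t].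
Proof.
move=> n3 kn ck.
have [m0 [km0 m0n cm0]] : exists m0, [/\ (k <= m0)%N, (m0 < n)%N & colour m0 == t].
  have := colour_last n3; case: (eqVneq (colour n.-1) t) => [cn1 _|cn1 cn1'].
    by exists n.-1; rewrite cn1 eqxx; split => //; lia.
  exists n.-2; split => //; last by move: cn1; rewrite cn1'; case: t {ck}; case: (colour n.-2).
  lia.
have [m [/andP [km mm0] /eqP cm mfirst]] := @ex_first_ge (fun i => colour i == t) _ _ km0 cm0.
exists m; split => //; apply/andP; split; last by lia.
by rewrite ltn_neqAle km andbT; apply: contraNneq ck => ->; rewrite cm.
Qed.

Lemma x_path_colour t u v : (u < v < n)%N -> colour u = t -> colour v = t ->
  (forall i, (u < i < v)%N -> colour i != t) ->
  edge (pt u) (pt v) \in x_path p (colour_class t).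
Proof.
case/andP => uv vn cu cv between; have un := ltn_trans uv vn.
apply: x_path_edge; rewrite /x_consecutive !inE !x_rank_sorted // cu cv eqxx.
rewrite x_sorted_lt // uv; apply/forall_inP => w; rewrite inE => /eqP cw.
rewrite -(x_sorted_rank p_flat i0 w) !x_sorted_lt ?x_rank_lt //.
by apply: contraL (between _) _; rewrite cw eqxx.
Qed.

Lemma next_colour_change k : (2 <= k <= n - 2)%N -> exists m,
  [/\ (k < m < n)%N, colour m = ~~ colour k & forall i, (k <= i < m)%N -> colour i = colour k].
Proof.
case/andP => k2 kn; have n3 : (3 <= n)%N by lia.
have kn2 : (k <= n.-2)%N by lia.
have ck : colour k != ~~ colour k by case: (colour k).
have [m [km cm mnext]] := colour_after n3 kn2 ck.
by exists m; split => // i /mnext; case: (colour i); case: (colour k).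
Qed.

Definition right_end (e : 'I_n * 'I_n) := if (p e.1).1 < (p e.2).1 then e.2 else e.1.

(* The crossing found for p_k is recovered from its pair of edges as the left
   one of their right ends; this makes the count injective. *)
Definition first_right_end (ef : ('I_n * 'I_n) * ('I_n * 'I_n)) :=
  if (p (right_end ef.1)).1 < (p (right_end ef.2)).1 then right_end ef.1 else right_end ef.2.

Lemma right_end_edge u v : (p u).1 < (p v).1 -> right_end (edge u v) = v.
Proof.
by rewrite /right_end; case: (edge_cases u v) => -> /= uv; rewrite ?uv // ltNge (ltW uv).
Qed.

Definition crossing_pairs := [set ef : ('I_n * 'I_n) * ('I_n * 'I_n) |
  [&& ef.1 \in x_path p (colour_class true), ef.2 \in x_path p (colour_class false) &
      seg_cross (p ef.1.1) (p ef.1.2) (p ef.2.1) (p ef.2.2)]].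

Lemma crossing_ending_at k a b m : (a < k)%N -> (b < k)%N -> (k < m < n)%N ->
  edge (pt a) (pt k) \in x_path p (colour_class (colour k)) ->
  edge (pt b) (pt m) \in x_path p (colour_class (~~ colour k)) ->
  seg_cross (q a) (q k) (q b) (q m) -> pt k \in first_right_end @: crossing_pairs.
Proof.
move=> ak bk /andP [km mn] eak ebm cross; have kn := ltn_trans km mn.
set e := edge (pt a) (pt k); set e' := edge (pt b) (pt m).
have [ek e'm] : right_end e = pt k /\ right_end e' = pt m.
  by rewrite !right_end_edge ?x_sorted_lt //; lia.
have km' : (p (pt k)).1 < (p (pt m)).1 by rewrite x_sorted_lt.
apply/imsetP; case: (colour k) eak ebm => eak ebm.
  exists (e, e'); last by rewrite /first_right_end /= ek e'm km'.
  by rewrite inE /= eak ebm seg_cross_edge.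
exists (e', e); last by rewrite /first_right_end /= ek e'm ltNge (ltW km').
by rewrite inE /= eak ebm seg_cross_edge seg_crossC.
Qed.

Lemma crossing_at_same_colour k : (2 <= k <= n - 2)%N -> colour k.-1 = colour k ->
  pt k \in first_right_end @: crossing_pairs.
Proof.
move=> kk ck1; have [m [km cm mnext]] := next_colour_change kk.
have sides : lower k.-1 != lower k.
  by have := colour_mid kk; rewrite ck1; case: eqP => // _; case: (colour k).
have k1_gt0 : (0 < k.-1)%N by lia.
have [b [bk1 cb bnext]] : exists b, [/\ (b < k.-1)%N, colour b = ~~ colour k &
    forall i, (b < i <= k.-1)%N -> colour i != ~~ colour k].
  by apply: colour_before => //; rewrite ck1; case: (colour k).
apply: (@crossing_ending_at _ k.-1 b m) => //; try lia.
- by apply: x_path_colour => // [|i]; lia.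
- apply: x_path_colour => //; first lia.
  move=> i /andP [bi im]; case: (leqP i k.-1) => ik; first by rewrite bnext ?bi.
  by rewrite mnext; [case: (colour k) | lia].
- by rewrite seg_crossC; apply: seg_cross_opposite_sides => //; apply/andP; split; lia.
Qed.

Lemma crossing_at_new_colour k : (2 <= k <= n - 2)%N -> colour k.-1 != colour k ->
  pt k \in first_right_end @: crossing_pairs.
Proof.
move=> kk ck1; have [m [km cm mnext]] := next_colour_change kk.
have sides : lower k.-1 = lower k.
  by have := colour_mid kk; case: eqP => // _ ck; rewrite ck eqxx in ck1.
have k1_gt0 : (0 < k.-1)%N by lia.
have [a [ak1 ca anext]] := colour_before k1_gt0 ck1.
apply: (@crossing_ending_at _ a k.-1 m) => //; try lia.
- by apply: x_path_colour => // [|i /andP [ai ik]]; [|rewrite anext ?ai]; lia.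
- apply: x_path_colour => //; first lia.
    by move: ck1; case: (colour k.-1); case: (colour k).
  by move=> i ki; rewrite mnext; [case: (colour k) | lia].
- by apply: seg_cross_same_side => //; apply/andP; split; lia.
Qed.

Lemma crossing_at k : (2 <= k <= n - 2)%N -> pt k \in first_right_end @: crossing_pairs.
Proof.
move=> kk; have [] := eqVneq (colour k.-1) (colour k).
  exact: crossing_at_same_colour.
exact: crossing_at_new_colour.
Qed.

Lemma colour_classC : ~: colour_class true = colour_class false.
Proof. by apply/setP => i; rewrite !inE; case: (colour _). Qed.

Lemma card_crossing_pairs : (n - 3 <= #|crossing_pairs|)%N.
Proof.
pose k_of (j : 'I_(n - 3)) := pt (j + 2).
have k_lt (j : 'I_(n - 3)) : (j + 2 < n)%N by have := ltn_ord j; lia.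
have k_of_inj : injective k_of.
  move=> i j /(congr1 (x_rank p)); rewrite !x_rank_sorted ?k_lt // => /eqP.
  by rewrite eqn_add2r => /eqP/val_inj.
suff /subset_leq_card : k_of @: setT \subset first_right_end @: crossing_pairs.
  by rewrite card_imset // cardsT card_ord => /leq_trans; apply; apply: leq_imset_card.
apply/subsetP => _ /imsetP [j _ ->]; apply: crossing_at.
by rewrite leq_addl /=; have := ltn_ord j; lia.
Qed.

End FlatConvexPosition.

Theorem lemma5 (R : realType) (n : nat) (p : 'I_n -> R * R) :
  injective p -> generic p -> flat p -> convex_position p ->
  cr_ge p (n - 3).
Proof.
move=> _ [p_noncollinear _] p_flat p_convex.
have [n0|n_gt0] := posnP n.
  by exists set0 => ER EB _ _; rewrite (_ : n - 3 = 0)%N // n0.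
set i0 := Ordinal n_gt0; exists (colour_class p_flat i0 true) => ER EB.
rewrite colour_classC => /(mst_x_path p_flat) -> /(mst_x_path p_flat) ->.
exact: (@card_crossing_pairs R n p p_flat p_noncollinear p_convex i0).
Qed.
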